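(* For every Parikh vector $P \in \mathbb{N}_0^{\sigma}$ with $n = \sum_{a\in\Sigma} P[a] \geq 1$, the diameter of the configuration graph $G(P)$ equals $n - \max_{a \in \Sigma} P[a]$.
   Context: Alphabet $\Sigma = [\sigma]$. For $P \in \mathbb{N}_0^\sigma$, $n := \sum_a P[a]$ and $\Sigma^{*|_P}$ is the set of words of length $n$ over $\Sigma$ in which each symbol $a$ occurs exactly $P[a]$ times. For a word $w$ and $i\neq j$ with $w[i]\neq w[j]$, the 2-swap $w\circ(i,j)$ exchanges the symbols at positions $i$ and $j$. The configuration graph $G(P)$ has vertex set $\Sigma^{*|_P}$ and an edge $\{w,u\}$ whenever $u = w\circ(i,j)$ for some 2-swap. $G(P)$ is connected; its diameter is the maximum over pairs of vertices of their shortest-path distance. *)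

From mathcomp Require Import all_boot all_fingroup.
Set Implicit Arguments. Unset Strict Implicit. Unset Printing Implicit Defensive.

Section Config.
Variables (sigma : nat) (P : 'I_sigma -> nat).

Definition plen : nat := \sum_(a < sigma) P a.

Definition word := plen.-tuple 'I_sigma.

Definition in_parikh (w : word) : bool :=
  [forall a : 'I_sigma, count_mem a w == P a].

Definition swap2 (w : word) (i j : 'I_plen) : word :=
  [tuple tnth w (tperm i j k) | k < plen].

Definition adjG (w u : word) : bool :=
  [&& in_parikh w, in_parikh u &
   [exists i : 'I_plen, exists j : 'I_plen,
      (i != j) && (tnth w i != tnth w j) && (u == swap2 w i j)]].

Definition walk_len (w u : word) (k : nat) : Prop :=
  exists p : seq word, [/\ path adjG w p, last w p = u & size p = k].

Definition is_dist (w u : word) (d : nat) : Prop :=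
  walk_len w u d /\ forall k, walk_len w u k -> d <= k.

Definition is_diameter (D : nat) : Prop :=
  (forall w u : word, in_parikh w -> in_parikh u ->
     exists d, is_dist w u d /\ d <= D) /\
  (exists w u : word, [/\ in_parikh w, in_parikh u & is_dist w u D]).

End Config.

From mathcomp Require Import all_boot all_fingroup zify.
From Stdlib Require Import Classical.
Set Implicit Arguments. Unset Strict Implicit. Unset Printing Implicit Defensive.

(* The diameter of the 2-swap graph G(P).  Write n = plen P, M = max_a P a.

   Fix a target word u and a symbol a, and let mismatch w u a
   count the positions j with w_j != u_j and u_j != a.  If this count is
   positive, pick such a position i; as w and u contain the symbol u_i equally
   often, u_i sits in w at some position j with u_j != u_i.  Swapping i and j
   in w repairs position i and strictly decreases the count, so
   dist(w, u) <= mismatch w u a <= n - P a, which is n - M for a maximal a.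

   A walk of length k from v to u yields a permutation pi with
   u_i = v_(pi i) having at least n - k cycles.  Take u sorted and v its
   rotation by n - M, so that v_i < u_i at every position i >= M (no symbol
   occurs more than M times).  On a cycle of pi the sums of u and of v agree,
   so every cycle meets the positions < M; hence pi has at most M cycles and
   k >= n - M. *)

Lemma count_mem_tnth n (T : eqType) (t : n.-tuple T) (c : T) :
  count_mem c t = \sum_(j < n) (tnth t j == c).
Proof.
rewrite -sum1_count big_tuple big_mkcond /=.
by apply: eq_bigr => j _; case: (_ == _).
Qed.

Lemma balance_mismatch n (T : eqType) (w u : n.-tuple T) (c : T) :
  count_mem c w = count_mem c u ->
  \sum_(j < n) ((tnth w j == c) && (tnth u j != c)) =
  \sum_(j < n) ((tnth u j == c) && (tnth w j != c)).
Proof.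
have split_c (x y : T) :
    (x == c : nat) = ((x == c) && (y == c)) + ((x == c) && (y != c)).
  by case: (x == c); case: (y == c).
rewrite !count_mem_tnth (eq_bigr _ (fun j _ => split_c (tnth w j) (tnth u j))).
rewrite [in RHS](eq_bigr _ (fun j _ => split_c (tnth u j) (tnth w j))).
rewrite !big_split /=.
have -> : \sum_(j < n) ((tnth u j == c) && (tnth w j == c)) =
          \sum_(j < n) ((tnth w j == c) && (tnth u j == c)).
  by apply: eq_bigr => j _; rewrite andbC.
by move/addnI.
Qed.

Lemma sum_gt0P n (F : 'I_n -> nat) : 0 < \sum_(j < n) F j -> exists j, 0 < F j.
Proof.
case: (pickP (fun j => 0 < F j)) => [j Fj|F0]; first by exists j.
by rewrite big1 // => j _; apply/eqP; rewrite -leqn0 leqNgt F0.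
Qed.

Lemma card_porbits1 (T : finType) : #|porbits (1 : {perm T})| = #|T|.
Proof.
rewrite /porbits card_imset // => x y /eqP.
by rewrite eq_porbit_mem => /porbitP [i ->]; rewrite expg1n perm1.
Qed.

Lemma card_porbits_mul_tperm (T : finType) (s : {perm T}) x y :
  #|porbits s| <= #|porbits (s * tperm x y)| + 1.
Proof.
rewrite -porbitsV -[porbits (s * _)]porbitsV invMg tpermV.
have /= := porbits_mul_tperm s^-1 x y.
case: (eqVneq x y) => [->|_]; first by rewrite tperm1 mul1g leq_addr.
by case: (x \notin _) => /= cycles; rewrite -(leq_add2r 1) -cycles -addnA leq_add2l.
Qed.

Lemma sum_porbit_comp (T : finType) (pi : {perm T}) (g : T -> nat) x :
  \sum_(i in porbit pi x) g (pi i) = \sum_(i in porbit pi x) g i.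
Proof.
rewrite [RHS](reindex_inj (@perm_inj _ pi)) /=; apply: eq_bigl => i.
have := porbit_perm pi 1 i; rewrite expg1 => orbit_pi.
by rewrite -!eq_porbit_mem orbit_pi.
Qed.

Lemma card_prefix n M : #|[set i : 'I_n | i < M]| <= M.
Proof.
rewrite cardE -(size_map val) -[X in _ <= X](size_iota 0).
apply: uniq_leq_size; first by rewrite (map_inj_uniq val_inj) enum_uniq.
by move=> x /mapP [i]; rewrite mem_enum inE => iM ->; rewrite mem_iota.
Qed.

Section PrefixCycles.
Variables (n M : nat) (pi : {perm 'I_n}) (f g : 'I_n -> nat).
Hypothesis fE : forall i, f i = g (pi i).
Hypothesis descent : forall i : 'I_n, M <= i -> g i < f i.

(* Every cycle of pi meets the positions below M: otherwise g < f on the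
   whole cycle, while the sums of f = g o pi and of g over a cycle agree. *)
Lemma porbit_meets_prefix x : exists2 i : 'I_n, i \in porbit pi x & i < M.
Proof.
case: (pickP (fun i => (i \in porbit pi x) && (i < M))) => [i /andP[]|none].
  by exists i.
have : \sum_(i in porbit pi x) (g i).+1 <= \sum_(i in porbit pi x) f i.
  apply: leq_sum => i i_x; apply: descent.
  by move: (none i); rewrite i_x /= => /negbT; rewrite -leqNgt.
under eq_bigr do rewrite -addn1.
rewrite big_split sum1_card (eq_bigr _ (fun i _ => fE i)) sum_porbit_comp /=.
rewrite -[X in _ <= X]addn0 leq_add2l leqn0.
by rewrite (negbTE (card_porbit_neq0 pi x)).
Qed.

Lemma card_porbits_le : #|porbits pi| <= M.
Proof.
have sub : porbits pi \subset porbit pi @: [set i : 'I_n | i < M].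
  apply/subsetP => _ /imsetP [x _ ->].
  have [i i_x i_M] := porbit_meets_prefix x.
  apply/imsetP; exists i; first by rewrite inE.
  by apply/eqP; rewrite eq_porbit_mem porbit_sym.
apply: leq_trans (subset_leq_card sub) _.
exact: leq_trans (leq_imset_card _ _) (card_prefix n M).
Qed.

End PrefixCycles.

Lemma sorted_gap sigma (s : seq 'I_sigma) M i x0 :
  sorted (relpre val leq) s -> (forall c, count_mem c s <= M) ->
  M <= i -> i < size s -> (nth x0 s (i - M) : nat) < nth x0 s i.
Proof.
move=> sorted_s count_s M_i i_s.
have nth_mono j k : j <= k -> k < size s -> (nth x0 s j : nat) <= nth x0 s k.
  move=> j_k k_s; apply: (sorted_leq_nth _ _ x0 sorted_s) => //=.
  - by move=> y x z; apply: leq_trans.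
  - by move=> x /=.
  - by rewrite inE (leq_ltn_trans j_k k_s).
rewrite ltn_neqAle nth_mono ?leq_subr // andbT; apply/negP => /eqP same.
set b := nth x0 s i.
(* if they were equal, the M + 1 entries from i - M to i would all be b *)
have all_b : all (pred1 b) (take M.+1 (drop (i - M) s)).
  apply/(all_nthP x0) => k; rewrite size_take size_drop => k_lt.
  have k_M : k < M.+1 by move: k_lt; case: ifP => // /negbT; lia.
  rewrite nth_take // nth_drop /=; apply/eqP/val_inj/eqP.
  have le_b : (nth x0 s (i - M + k) : nat) <= b by apply: nth_mono; lia.
  have ge_b : (nth x0 s (i - M) : nat) <= nth x0 s (i - M + k).
    by apply: nth_mono; lia.
  by rewrite eqn_leq le_b /b /= -same ge_b.
have size_take_M : size (take M.+1 (drop (i - M) s)) = M.+1.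
  by rewrite size_takel // size_drop; lia.
have := count_s b.
rewrite -(cat_take_drop (i - M) s) count_cat.
rewrite -(cat_take_drop M.+1 (drop (i - M) s)) count_cat.
move: all_b; rewrite all_count size_take_M => /eqP ->.
lia.
Qed.

Section SwapGraph.
Variables (sigma : nat) (P : 'I_sigma -> nat).
Local Notation n := (plen P).
Implicit Types (w u v : word P) (a c : 'I_sigma).

Lemma parikh_count w c : in_parikh w -> count_mem c w = P c.
Proof. by move/forallP/(_ c)/eqP. Qed.

Lemma tnth_swap2 w i j k : tnth (swap2 w i j) k = tnth w (tperm i j k).
Proof. by rewrite /swap2 tnth_mktuple. Qed.

Lemma parikh_swap2 w i j : in_parikh w -> in_parikh (swap2 w i j).
Proof.
move=> Hw; apply/forallP => c; rewrite count_mem_tnth.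
under eq_bigr do rewrite tnth_swap2.
rewrite (reindex_inj (@perm_inj _ (tperm i j))) /=.
under eq_bigr do rewrite tpermK.
by rewrite -count_mem_tnth parikh_count.
Qed.

Definition mismatch w u a : nat :=
  \sum_(j < n) ((tnth w j != tnth u j) && (tnth u j != a)).

Lemma mismatch_le w u a : in_parikh u -> mismatch w u a <= n - P a.
Proof.
move=> /(parikh_count a) <-.
have split_n : \sum_(j < n) (tnth u j != a) + \sum_(j < n) (tnth u j == a) = n.
  rewrite -big_split /= -[RHS]card_ord -sum1_card.
  by apply: eq_bigr => j _; case: (_ == _).
rewrite count_mem_tnth -[X in _ <= X - _]split_n addnK.
by apply: leq_sum => j _; case: (_ != _); case: (_ != _).
Qed.

(* Without counted mismatches the words agree: a mismatch at a position where
   u carries a would need a compensating one where u does not. *)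
Lemma mismatch0 w u a : in_parikh w -> in_parikh u -> mismatch w u a = 0 -> w = u.
Proof.
move=> Hw Hu /eqP; rewrite /mismatch sum_nat_eq0 => /forallP no_mis.
have {}no_mis j : ~~ ((tnth w j != tnth u j) && (tnth u j != a)).
  by move: (no_mis j); case: (_ && _).
apply: eq_from_tnth => k; apply/eqP; apply/negPn/negP => w_k.
have u_k : tnth u k = a.
  by apply/eqP; move: (no_mis k); rewrite w_k /=; case: (tnth u k == a).
have := balance_mismatch (etrans (parikh_count a Hw) (esym (parikh_count a Hu))).
rewrite big1; last first.
  move=> j _; move: (no_mis j).
  case: (tnth w j =P a) => //= w_j; case: (tnth u j =P a) => //= /eqP u_j.
  by rewrite w_j eq_sym u_j.
move=> /esym/eqP; rewrite sum_nat_eq0 => /forallP /(_ k) /=.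
by rewrite u_k eqxx eq_sym -u_k w_k.
Qed.

Lemma mismatch_swap w u a :
  in_parikh w -> in_parikh u -> 0 < mismatch w u a ->
  exists i j, adjG w (swap2 w i j) /\ mismatch (swap2 w i j) u a < mismatch w u a.
Proof.
move=> Hw Hu /sum_gt0P [i]; rewrite lt0b => /andP [w_i u_i].
have [j /andP [w_j u_j]] : exists j, (tnth w j == tnth u i) && (tnth u j != tnth u i).
  have bal := balance_mismatch
    (etrans (parikh_count (tnth u i) Hw) (esym (parikh_count (tnth u i) Hu))).
  have : 0 < \sum_(j < n) ((tnth w j == tnth u i) && (tnth u j != tnth u i)).
    by rewrite bal (bigD1 i) //= eqxx w_i.
  by case/sum_gt0P => j; rewrite lt0b; exists j.
have w_ij : tnth w i != tnth w j by rewrite (eqP w_j).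
have i_j : i != j by apply: contraNneq w_ij => ->.
exists i, j; split.
  rewrite /adjG Hw parikh_swap2 //=; apply/existsP; exists i; apply/existsP; exists j.
  by rewrite i_j w_ij eqxx.
rewrite /mismatch (bigD1 i) //= [X in _ < X](bigD1 i) //= tnth_swap2 tpermL.
rewrite (eqP w_j) eqxx w_i u_i add1n ltnS; apply: leq_sum => k k_i.
rewrite tnth_swap2; case: (eqVneq k j) => [->|k_j]; last by rewrite tpermD // eq_sym.
have u_ij : tnth u i != tnth u j by rewrite eq_sym.
rewrite tpermR (eqP w_j) u_ij /=.
by case: (_ != _); case: (_ != _).
Qed.

Lemma walk_mismatch w u a : in_parikh w -> in_parikh u ->
  exists2 k, k <= mismatch w u a & walk_len w u k.
Proof.
move=> + Hu; move mis_w: (mismatch w u a) => m.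
elim/ltn_ind: m w mis_w => m IH w mis_w Hw; rewrite -mis_w.
case: (posnP (mismatch w u a)) => [/(mismatch0 Hw Hu) ->|pos].
  by exists 0 => //; exists [::].
have [i [j [adj lt_mis]]] := mismatch_swap Hw Hu pos.
have lt_m : mismatch (swap2 w i j) u a < m by rewrite -mis_w.
have [k le_k [p [path_p last_p size_p]]] := IH _ lt_m _ erefl (parikh_swap2 i j Hw).
exists k.+1; first exact: leq_ltn_trans le_k lt_mis.
by exists (swap2 w i j :: p); rewrite /= adj path_p size_p.
Qed.

Lemma dist_of_walk w u k : walk_len w u k -> exists d, is_dist w u d /\ d <= k.
Proof.
elim/ltn_ind: k => k IH walk_k.
have [[k' [lt_k' walk_k']]|none] := classic (exists k', k' < k /\ walk_len w u k').
  have [d [dist_d le_d]] := IH k' lt_k' walk_k'.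
  by exists d; split => //; apply: leq_trans le_d (ltnW lt_k').
exists k; split => //; split => // k' walk_k'.
by rewrite leqNgt; apply/negP => lt_k'; apply: none; exists k'.
Qed.

Lemma dist_upper w u a : in_parikh w -> in_parikh u ->
  exists d, is_dist w u d /\ d <= n - P a.
Proof.
move=> Hw Hu; have [k le_k /dist_of_walk [d [dist_d le_d]]] := walk_mismatch a Hw Hu.
by exists d; split; last exact: leq_trans le_d (leq_trans le_k (mismatch_le w a Hu)).
Qed.

(* A walk of length k from w to x rearranges w by a permutation that has at
   least n - k cycles, since each 2-swap composes with a transposition. *)
Lemma walk_perm w x k : walk_len w x k -> exists pi : {perm 'I_n},
  (forall i, tnth x i = tnth w (pi i)) /\ n <= #|porbits pi| + k.
Proof.
case=> p [path_p last_p <-].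
elim: p w path_p last_p => [|y p IH] w /=.
  move=> _ ->; exists 1%g.
  by rewrite card_porbits1 card_ord addn0; split => // i; rewrite perm1.
case/andP=> /and3P [_ _ /existsP [i /existsP [j /andP [_ /eqP ->]]]] path_p last_p.
have [pi [x_pi cycles]] := IH _ path_p last_p.
exists (pi * tperm i j)%g; split; first by move=> l; rewrite x_pi tnth_swap2 permM.
apply: (leq_trans cycles); rewrite addnS -addn1 addnAC leq_add2r.
exact: card_porbits_mul_tperm.
Qed.

Lemma walk_lower M v u k :
  (forall i : 'I_n, M <= i -> (tnth v i : nat) < tnth u i) ->
  walk_len v u k -> n - M <= k.
Proof.
move=> descent /walk_perm [pi [u_pi cycles]].
have := card_porbits_le (fun i => congr1 val (u_pi i)) descent.
lia.
Qed.

Lemma sorted_word : exists u : word P, in_parikh u /\ sorted (relpre val leq) u.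
Proof.
pose s0 := flatten [seq nseq (P b) b | b <- enum 'I_sigma].
have count_s0 c : count_mem c s0 = P c.
  rewrite count_flatten -map_comp sumnE big_map big_enum /=.
  under eq_bigr do rewrite count_nseq.
  rewrite (bigD1 c) //= eqxx mul1n big1 ?addn0 // => b b_c.
  by case: eqP b_c => [->|]; rewrite ?eqxx.
have size_s0 : size (sort (relpre val leq) s0) == n.
  rewrite size_sort size_flatten /shape -map_comp sumnE big_map big_enum /=.
  by under eq_bigr do rewrite size_nseq.
exists (Tuple size_s0); split; last by apply: sort_sorted => x y; apply: leq_total.
by apply/forallP => c /=; rewrite (seq.permP (permEl (perm_sort _ _))) count_s0.
Qed.

Lemma extremal_pair M : (forall c, P c <= M) ->
  exists v u : word P, [/\ in_parikh v, in_parikh u &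
    forall i : 'I_n, M <= i -> (tnth v i : nat) < tnth u i].
Proof.
move=> P_le; have [u [Hu sorted_u]] := sorted_word.
exists (rot_tuple (n - M) u), u; split => //.
  by apply/forallP => c; rewrite (seq.permP (permEl (perm_rot _ _))) parikh_count.
move=> i M_i; have i_n := ltn_ord i; have x0 := tnth u i.
rewrite !(tnth_nth x0) /= /rot nth_cat size_drop size_tuple.
rewrite ifF; last by apply/negbTE; rewrite -leqNgt; lia.
have -> : i - (n - (n - M)) = i - M by lia.
rewrite nth_take; last by lia.
apply: sorted_gap => //; last by rewrite size_tuple.
by move=> c; rewrite parikh_count.
Qed.

End SwapGraph.

Theorem theorem1 (sigma : nat) (P : 'I_sigma -> nat) :
  1 <= plen P ->
  is_diameter P (plen P - \max_(a < sigma) P a).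
Proof.
move=> n_gt0.
have [a _] := sum_gt0P n_gt0.
have [a0 max_a0] : {a0 | \max_(a < sigma) P a = P a0}.
  by apply: eq_bigmax; apply/card_gt0P; exists a.
have P_le c : P c <= P a0 by rewrite -max_a0 leq_bigmax.
rewrite max_a0; split=> [w u Hw Hu|]; first exact: dist_upper.
have [v [u [Hv Hu descent]]] := extremal_pair P_le.
have [d [dist_d le_d]] := dist_upper a0 Hv Hu.
have ge_d := walk_lower descent dist_d.1.
exists v, u; split => //.
by have -> : plen P - P a0 = d by apply/eqP; rewrite eqn_leq le_d ge_d.
Qed.
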